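(* Let $\lambda_1,\dots,\lambda_n$ be positive integers, $L=\mathrm{lcm}(\lambda_1,\dots,\lambda_n)$, $\omega_i=L/\lambda_i$, and $\Lambda=\langle1/\lambda_1,\dots,1/\lambda_n\rangle$ the additive submonoid of $\mathbb{Q}_{\ge}$ they generate. If $\Lambda$ is quasinormal, then $L+1$ lies in the additive submonoid $\langle\omega_1,\dots,\omega_n\rangle$ of $\mathbb{N}$ generated by $\omega_1,\dots,\omega_n$.
   Context: A submonoid $S$ of $\mathbb{Q}_{\ge}$ is quasinormal if whenever $x\in S$ and $x\ge p$ for a positive integer $p$, there exist $y_1,\dots,y_p\in S$ with $y_i\ge1$ for all $i$ and $x=y_1+\cdots+y_p$. *)

From mathcomp Require Import all_boot all_order all_algebra.
Set Implicit Arguments. Unset Strict Implicit. Unset Printing Implicit Defensive.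
Import Order.TTheory GRing.Theory Num.Theory.
Local Open Scope ring_scope.

Definition rat_monoid_gen (n : nat) (g : 'I_n -> rat) (x : rat) : Prop :=
  exists c : 'I_n -> nat, x = \sum_(i < n) (c i)%:R * g i.

Definition nat_monoid_gen (n : nat) (w : 'I_n -> nat) (m : nat) : Prop :=
  exists c : 'I_n -> nat, m = (\sum_(i < n) c i * w i)%N.

Definition quasinormal (S : rat -> Prop) : Prop :=
  forall (x : rat) (p : nat), S x -> (0 < p)%N -> p%:R <= x ->
    exists y : 'I_p -> rat,
      (forall i, S (y i)) /\ (forall i, 1 <= y i) /\ x = \sum_(i < p) y i.

Definition lcm_all (n : nat) (lam : 'I_n -> nat) : nat :=
  \big[lcmn/1%N]_(i < n) lam i.

From mathcomp Require Import all_boot all_order all_algebra.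
From mathcomp Require Import zify ring lra.
Import Order.TTheory GRing.Theory Num.Theory.
Local Open Scope ring_scope.

(* The w_i := L / lambda_i are coprime as a family, so by Bezout and by
   shifting coefficients modulo lambda_i (note lambda_i * w_i = L) some
   element of <w_1, ..., w_n> equals p L + 1 with p >= 1.  Dividing by L,
   x := p + 1/L lies in Lambda and x >= p, so quasinormality writes x as a
   sum of p elements y_i >= 1 of Lambda.  Their excesses y_i - 1 add up to
   1/L, so some y_j satisfies 1 < y_j <= 1 + 1/L; then L y_j is an element
   of <w_1, ..., w_n> in the interval (L, L + 1], i.e. it is L + 1. *)

Lemma Bezout_biggcdn {n} (w : 'I_n -> nat) :
  exists a : 'I_n -> int,
    \sum_(i < n) a i * (w i)%:Z = (\big[gcdn/0%N]_(i < n) w i)%:Z.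
Proof.
elim: n w => [|n IHn] w; first by exists (fun _ => 0); rewrite !big_ord0.
have [a Ha] := IHn (fun j => w (lift ord0 j)).
have [u [v Huv]] :=
  Bezoutz (w ord0)%:Z (\big[gcdn/0%N]_(j < n) w (lift ord0 j))%:Z.
exists (fun i => if unlift ord0 i is Some j then v * a j else u).
rewrite !big_ord_recl unlift_none.
under eq_bigr => j _ do rewrite liftK -mulrA.
by rewrite -mulr_sumr Ha Huv.
Qed.

Lemma exists_nat_congr_ge (a : int) (m b : nat) : (0 < m)%N ->
  exists c : nat, exists k : int, (b <= c)%N /\ c%:Z = a + k * m%:Z.
Proof.
move=> m_gt0; have m_neq0 : m%:Z != 0 by lia.
exists (absz (a %% m%:Z)%Z + b * m)%N, (b%:Z - (a %/ m%:Z)%Z).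
have := divz_eq a m%:Z; have := modz_ge0 a m_neq0; nia.
Qed.

Lemma sum_ge1_excess {R : realDomainType} {p : nat} {y : 'I_p -> R} :
  (forall i, 1 <= y i) -> p%:R < \sum_(i < p) y i ->
  exists j, 1 < y j /\ y j - 1 <= \sum_(i < p) y i - p%:R.
Proof.
move=> y_ge1 sum_gt.
have excessE : \sum_(i < p) y i - p%:R = \sum_(i < p) (y i - 1).
  by rewrite sumrB sumr_const card_ord.
have [j yj_gt1] : exists j, 1 < y j.
  apply/existsP; apply: contraTT sum_gt => /existsPn y_le1.
  rewrite -leNgt -[p in p%:R]card_ord -sumr_const.
  by apply: ler_sum => i _; rewrite leNgt y_le1.
exists j; split => //; rewrite excessE (bigD1 j) //= lerDl.
by apply: sumr_ge0 => i _; rewrite subr_ge0.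
Qed.

Section LcmQuotients.
Context {n : nat} {lam : 'I_n -> nat}.
Hypothesis lam_gt0 : forall i, (0 < lam i)%N.

Local Notation L := (lcm_all lam).
Local Notation w i := (L %/ lam i)%N.

Lemma lcm_all_gt0 : (0 < L)%N.
Proof.
rewrite /lcm_all; apply: (big_ind (fun m => 0 < m)%N) => //.
by move=> a b a_gt0 b_gt0; rewrite lcmn_gt0 a_gt0.
Qed.

Lemma dvdn_lcm_all i : (lam i %| L)%N.
Proof. exact: biglcmn_sup. Qed.

Lemma lcm_quotientK i : (w i * lam i)%N = L.
Proof. by rewrite divnK ?dvdn_lcm_all. Qed.

Lemma biggcdn_lcm_quotients : (0 < n)%N -> (\big[gcdn/0%N]_(i < n) w i)%N = 1%N.
Proof.
move=> n_gt0; set G := (\big[gcdn/0%N]_(i < n) w i)%N.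
pose i0 := Ordinal n_gt0.
have G_dvd i : (G %| w i)%N by apply: biggcdn_inf.
have G_gt0 : (0 < G)%N.
  rewrite lt0n; apply: contraTneq (G_dvd i0) => ->; rewrite dvd0n.
  by apply: contraTneq lcm_all_gt0 => w0; rewrite -(lcm_quotientK i0) w0.
have L_dvd_LG : (L %| L %/ G)%N.
  apply/dvdn_biglcmP => i _.
  rewrite -{1}(lcm_quotientK i) -{1}(divnK (G_dvd i)) mulnAC mulnK //.
  exact: dvdn_mull.
have LG_gt0 : (0 < L %/ G)%N.
  by rewrite divn_gt0 // dvdn_leq ?lcm_all_gt0 // -(lcm_quotientK i0) dvdn_mulr.
have := dvdn_leq LG_gt0 L_dvd_LG; have := lcm_all_gt0; nia.
Qed.

Lemma lcm_quotients_gen_1_mod_lcm : (0 < n)%N ->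
  exists2 p : nat, (0 < p)%N & nat_monoid_gen (fun i => w i) (p * L).+1.
Proof.
move=> n_gt0; have [a Ha] := Bezout_biggcdn (fun i => w i).
rewrite biggcdn_lcm_quotients // in Ha.
have {}Ha : \sum_(i < n) a i * (w i)%:Z = 1 by [].
have ckE i : exists ck : nat * int,
    (2 * lam i <= ck.1)%N /\ ck.1%:Z = a i + ck.2 * (lam i)%:Z.
  have [ci [ki ciE]] := exists_nat_congr_ge (a i) (lam i) (2 * lam i) (lam_gt0 i).
  by exists (ci, ki).
have [c cE] := fin_all_exists ckE.
pose K := \sum_(i < n) (c i).2.
pose S := (\sum_(i < n) (c i).1 * w i)%N.
have sumE : S%:Z = 1 + L%:Z * K.
  rewrite (big_morph Posz PoszD erefl) -Ha mulr_sumr -big_split /=.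
  apply: eq_bigr => i _; have [_ ciE] := cE i.
  have wL : (w i)%:Z * (lam i)%:Z = L%:Z by rewrite -PoszM lcm_quotientK.
  by rewrite PoszM ciE -wL; ring.
have S_ge : (2 * L <= S)%N.
  pose i0 := Ordinal n_gt0; have [c0_ge _] := cE i0.
  rewrite /S (bigD1 i0) //=; apply: leq_trans (leq_addr _ _).
  rewrite -[X in (2 * X <= _)%N](lcm_quotientK i0) mulnA mulnAC.
  exact: leq_mul c0_ge (leqnn _).
have K_gt0 : 0 < K.
  move: sumE S_ge lcm_all_gt0; clearbody S K; move: (lcm_all lam) => l; nia.
exists (absz K); first by lia.
exists (fun i => (c i).1); apply/eqP; rewrite -/S -eqz_nat sumE; lia.
Qed.

Lemma sum_inv_mulr_lcm (d : 'I_n -> nat) :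
  (\sum_(i < n) (d i)%:R * ((lam i)%:R)^-1) * L%:R
  = ((\sum_(i < n) d i * w i)%N)%:R :> rat.
Proof.
rewrite mulr_suml natr_sum; apply: eq_bigr => i _.
have lam_neq0 : (lam i)%:R != 0 :> rat by rewrite pnatr_eq0 -lt0n.
have wL : (w i)%:R * (lam i)%:R = L%:R :> rat by rewrite -natrM lcm_quotientK.
by rewrite natrM -wL; field.
Qed.

End LcmQuotients.

Theorem proposition4p9 (n : nat) (lam : 'I_n -> nat) :
  (0 < n)%N ->
  (forall i, (0 < lam i)%N) ->
  quasinormal (rat_monoid_gen (fun i => ((lam i)%:R)^-1 : rat)) ->
  nat_monoid_gen (fun i => (lcm_all lam %/ lam i)%N) (lcm_all lam).+1.
Proof.
move=> n_gt0 lam_gt0 qnormal.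
have [p p_gt0 [c cE]] := lcm_quotients_gen_1_mod_lcm lam_gt0 n_gt0.
set L := lcm_all lam in cE *.
have L_gt0 : 0 < L%:R :> rat by rewrite ltr0n lcm_all_gt0.
set x := \sum_(i < n) (c i)%:R * ((lam i)%:R)^-1 : rat.
have xL : x * L%:R = p%:R * L%:R + 1 by rewrite sum_inv_mulr_lcm // -cE -natrM -natr1.
have x_gt : p%:R < x by rewrite -(ltr_pM2r L_gt0) xL ltrDl.
have [y [y_gen [y_ge1 xE]]] := qnormal x p (ex_intro _ c erefl) p_gt0 (ltW x_gt).
rewrite xE in x_gt xL.
have [j [yj_gt1 yj_le]] := sum_ge1_excess y_ge1 x_gt.
have [d yjE] := y_gen j; exists d.
have yjL := sum_inv_mulr_lcm lam_gt0 d; rewrite -yjE in yjL.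
apply/eqP; rewrite eqn_leq; apply/andP; split.
  by rewrite -(ltr_nat rat) -yjL; nra.
by rewrite -(ler_nat rat) -natr1 -yjL; nra.
Qed.
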